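(* Let $k\ge 2$ be an odd integer which is not prime. Every $k$-$T_0T^\ast$-perfect number $n>1$ has the form $p_1^{2k-1}$ for a prime $p_1$, or the form $p_1^{(d-1)/2}\cdot p_2^{(k/d-1)/2}$ for distinct primes $p_1,p_2$, where $d$ is a positive divisor of $k$ satisfying $2<d<k$.
   Context: For a positive integer $m$, $T(m)$ denotes the product of all positive divisors of $m$, and $T^\ast(m)$ the product of all unitary divisors of $m$ (divisors $d$ with $\gcd(d,m/d)=1$). For an integer $K\ge 2$, an integer $n>1$ is called $K$-$T_0T^\ast$-perfect if $T(T^\ast(n))=n^K$. *)

From mathcomp Require Import all_boot.
Set Implicit Arguments. Unset Strict Implicit. Unset Printing Implicit Defensive.

Definition Tdiv (m : nat) : nat := \prod_(d <- divisors m) d.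

Definition Tstar (m : nat) : nat :=
  \prod_(d <- divisors m | coprime d (m %/ d)) d.

Definition KT0Tstar_perfect (K n : nat) : Prop :=
  1 < n /\ Tdiv (Tstar n) = n ^ K.

From mathcomp Require Import all_boot.
From mathcomp Require Import zify.

(* Pairing each divisor d of m with m/d gives T(m)^2 = m^tau(m); the same
   pairing on unitary divisors gives T*(n)^2 = n^(2^omega(n)), since unitary
   divisors are counted multiplicatively.  So T(T*(n)) = n^K forces
   2K = 2^(omega(n)-1) * tau(T*(n)), hence omega(n) <= 2 when K is odd.  For
   n = p^a, T*(n) = n and 2K = a + 1; for n = p^a q^b, T*(n) = n^2 and
   K = tau(p^(2a) q^(2b)) = (2a+1)(2b+1), so d = 2a+1. *)

Lemma divn_divn {m d} : 0 < m -> d %| m -> m %/ (m %/ d) = d.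
Proof. by move=> m_gt0 dv_dm; rewrite divnA // mulKn. Qed.

Lemma prod_divisors_sqr m (P : pred nat) : 0 < m ->
  (forall d, d %| m -> P (m %/ d) = P d) ->
  (\prod_(d <- divisors m | P d) d) ^ 2 = m ^ count P (divisors m).
Proof.
move=> m_gt0 P_sym; rewrite -big_filter -size_filter.
set U := filter P (divisors m).
have memU d : (d \in U) = (d %| m) && P d.
  by rewrite mem_filter -dvdn_divisors // andbC.
have U_uniq : uniq U by rewrite filter_uniq // divisors_uniq.
have perm_compl : perm_eq U (map (divn m) U).
  apply: uniq_perm => //.
    rewrite map_inj_in_uniq // => x y.
    rewrite !memU => /andP[xm _] /andP[ym _] exy.
    by rewrite -(divn_divn m_gt0 xm) exy divn_divn.
  move=> x; apply/idP/mapP.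
    rewrite memU => /andP[xm Px]; exists (m %/ x); last by rewrite divn_divn.
    by rewrite memU dvdn_div // P_sym.
  by case=> y; rewrite memU => /andP[ym Py] ->; rewrite memU dvdn_div // P_sym.
rewrite expnS expn1 {2}(perm_big _ perm_compl) big_map -big_split /=.
rewrite (eq_big_seq (fun _ => m)) => [|x]; last first.
  by rewrite memU => /andP[xm _]; rewrite mulnC divnK.
by rewrite big_const_seq count_predT iter_muln_1.
Qed.

Lemma count_allpairs (S T : eqType) (R : Type) (f : S -> T -> R) (P : pred R)
    (p : pred S) (q : pred T) (s : seq S) (t : seq T) :
  {in s & t, forall x y, P (f x y) = p x && q y} ->
  count P [seq f x y | x <- s, y <- t] = count p s * count q t.
Proof.
elim: s => [|x s IHs] Pf //; rewrite allpairs_cons count_cat count_map /= mulnDl.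
rewrite IHs => [|x' y x's yt]; last by apply: Pf; rewrite // inE x's orbT.
congr (_ + _); rewrite (@eq_in_count _ _ (fun y => p x && q y)) => [|y yt].
  by case: (p x); rewrite ?mul1n ?mul0n ?count_pred0.
by apply: Pf; rewrite // inE eqxx.
Qed.

Lemma gcdn_coprime_divisorM {a b x y} :
  coprime a b -> x %| a -> y %| b -> gcdn a (x * y) = x.
Proof.
by move=> co_ab xa yb; rewrite Gauss_gcdl ?(coprime_dvdr yb) //; apply/gcdn_idPr.
Qed.

Lemma coprime_dvdnM_gcd a b d : coprime a b -> d %| a * b ->
  d = gcdn d a * gcdn d b.
Proof.
move=> co_ab d_ab; apply/eqP; rewrite eqn_dvd; apply/andP; split.
  by rewrite muln_gcdl dvdn_gcd dvdn_mulr //= muln_gcdr dvdn_gcd dvdn_mull.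
rewrite Gauss_dvd ?dvdn_gcdl //.
exact: coprime_dvdl (dvdn_gcdr _ _) (coprime_dvdr (dvdn_gcdr _ _) co_ab).
Qed.

Lemma perm_divisorsM {a b} : 0 < a -> 0 < b -> coprime a b ->
  perm_eq (divisors (a * b)) [seq x * y | x <- divisors a, y <- divisors b].
Proof.
move=> a_gt0 b_gt0 co_ab; have ab_gt0 : 0 < a * b by rewrite muln_gt0 a_gt0.
apply: uniq_perm; first exact: divisors_uniq.
  rewrite allpairs_uniq ?divisors_uniq // => -[x1 y1] [x2 y2] /=.
  move=> /allpairsP[[u1 v1] [/=]]; rewrite -!dvdn_divisors // => u1a v1b [-> ->].
  move=> /allpairsP[[u2 v2] [/=]]; rewrite -!dvdn_divisors // => u2a v2b [-> ->] e.
  have gx u v : u %| a -> v %| b -> gcdn a (u * v) = u.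
    exact: gcdn_coprime_divisorM.
  have gy u v : u %| a -> v %| b -> gcdn b (u * v) = v.
    by move=> ua vb; rewrite mulnC (gcdn_coprime_divisorM _ vb ua) // coprime_sym.
  have -> : u1 = u2 by rewrite -(gx u1 v1) // e gx.
  by have -> : v1 = v2 by rewrite -(gy u1 v1) // e gy.
move=> d; rewrite -dvdn_divisors //; apply/idP/allpairsP => [d_ab | [[x y] [/=]]].
  exists (gcdn d a, gcdn d b); rewrite -!dvdn_divisors // !dvdn_gcdr.
  by split=> //=; apply: coprime_dvdnM_gcd.
by rewrite -!dvdn_divisors // => xa yb ->; apply: dvdn_mul.
Qed.

Lemma size_divisorsM a b : 0 < a -> 0 < b -> coprime a b ->
  size (divisors (a * b)) = size (divisors a) * size (divisors b).
Proof.
move=> a_gt0 b_gt0 co_ab; rewrite -!count_predT.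
rewrite (permP (perm_divisorsM a_gt0 b_gt0 co_ab)).
exact: (@count_allpairs _ _ _ _ _ predT predT).
Qed.

Definition unitary (n d : nat) := coprime d (n %/ d).

Definition unitary_count (n : nat) := count (unitary n) (divisors n).

Lemma unitaryM a b x y : coprime a b -> x %| a -> y %| b ->
  unitary (a * b) (x * y) = unitary a x && unitary b y.
Proof.
move=> co_ab /dvdnP[a' def_a] /dvdnP[b' def_b]; subst a b.
rewrite /unitary.
have [-> | x_gt0] := posnP x; first by rewrite !(mul0n, muln0).
have [-> | y_gt0] := posnP y; first by rewrite !(mul0n, muln0) andbF.
rewrite mulnACA !mulnK ?muln_gt0 ?x_gt0 // coprimeMl !coprimeMr.
rewrite coprimeMl !coprimeMr in co_ab.
case/and3P: co_ab => /andP[_ co_a'y] -> _.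
by rewrite [coprime y a']coprime_sym co_a'y !andbT.
Qed.

Lemma unitary_countM a b : 0 < a -> 0 < b -> coprime a b ->
  unitary_count (a * b) = unitary_count a * unitary_count b.
Proof.
move=> a_gt0 b_gt0 co_ab.
rewrite /unitary_count (permP (perm_divisorsM a_gt0 b_gt0 co_ab)).
by apply: count_allpairs => x y; rewrite -!dvdn_divisors //; apply: unitaryM.
Qed.

Lemma perm_divisors_pexp p e : prime p ->
  perm_eq (divisors (p ^ e)) [seq p ^ i | i <- iota 0 e.+1].
Proof.
move=> p_pr; have p_gt1 := prime_gt1 p_pr.
apply: uniq_perm; first exact: divisors_uniq.
  by rewrite map_inj_uniq ?iota_uniq //; apply: expnI.
move=> d; rewrite -dvdn_divisors ?expn_gt0 ?prime_gt0 //; apply/idP/mapP.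
  by case/(dvdn_pfactor _ _ p_pr) => i le_ie ->; exists i; rewrite // mem_iota.
by case=> i; rewrite mem_iota => /andP[_ le_ie] ->; apply/dvdn_pfactor => //; exists i.
Qed.

Lemma size_divisors_pexp p e : prime p -> size (divisors (p ^ e)) = e.+1.
Proof. by move/perm_divisors_pexp/perm_size->; rewrite size_map size_iota. Qed.

Lemma unitary_pexp p e i : prime p -> i <= e ->
  unitary (p ^ e) (p ^ i) = (i == 0) || (i == e).
Proof.
move=> p_pr le_ie; have p_gt1 := prime_gt1 p_pr.
rewrite /unitary -expnB ?prime_gt0 //.
case: i le_ie => [|i] le_ie; first by rewrite coprime1n.
have [-> | ne_ie] := eqVneq i.+1 e; first by rewrite subnn coprimen1 orbT.
have lt_ie : i.+1 < e by rewrite ltn_neqAle ne_ie.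
by rewrite coprime_pexpl // coprime_pexpr ?subn_gt0 // /coprime gcdnn gtn_eqF.
Qed.

Lemma unitary_count_pexp p e : prime p -> 0 < e -> unitary_count (p ^ e) = 2.
Proof.
move=> p_pr e_gt0.
rewrite /unitary_count (permP (perm_divisors_pexp _ e p_pr)) count_map.
rewrite (@eq_in_count _ _ (predU (pred1 0) (pred1 e))) => [|i]; last first.
  by rewrite mem_iota => /andP[_ le_ie]; apply: unitary_pexp.
have := count_predUI (pred1 0) (pred1 e) (iota 0 e.+1).
rewrite (@eq_count _ (predI _ _) pred0) => [|i /=]; last by apply/negbTE; lia.
rewrite count_pred0 addn0 => ->.
by rewrite !(count_uniq_mem _ (iota_uniq 0 e.+1)) !mem_iota; lia.
Qed.

Lemma unitary_count_prod (s : seq nat) (e : nat -> nat) :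
  uniq s -> all prime s -> {in s, forall p, 0 < e p} ->
  unitary_count (\prod_(p <- s) p ^ e p) = 2 ^ size s.
Proof.
elim: s => [|p s IHs /= /andP[p_s s_uniq] /andP[p_pr s_pr] e_gt0].
  by rewrite big_nil.
have pos_s : {in s, forall q, 0 < e q}.
  by move=> q qs; apply: e_gt0; rewrite inE qs orbT.
have co_p_s : coprime p (\prod_(q <- s) q ^ e q).
  rewrite big_seq; apply: (big_ind (coprime p)) => [|x y|q qs]; first exact: coprimen1.
    by rewrite coprimeMr => ->.
  rewrite coprimeXr // prime_coprime // dvdn_prime2 //; last exact: (allP s_pr).
  by apply: contraNneq p_s => ->.
have prod_gt0 : 0 < \prod_(q <- s) q ^ e q.
  rewrite big_seq; apply: prodn_cond_gt0 => q qs.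
  by rewrite expn_gt0 prime_gt0 // (allP s_pr).
rewrite big_cons (unitary_countM _ _ _ prod_gt0) ?expn_gt0 ?prime_gt0 ?coprimeXl //.
by rewrite unitary_count_pexp ?e_gt0 ?inE ?eqxx // IHs // expnS.
Qed.

Lemma prod_primes_logn {n} : 0 < n -> n = \prod_(p <- primes n) p ^ logn p n.
Proof. by move=> n_gt0; rewrite {1}(prod_prime_decomp n_gt0) prime_decompE big_map. Qed.

Lemma unitary_count_primes n : 0 < n -> unitary_count n = 2 ^ size (primes n).
Proof.
move=> n_gt0; rewrite {1}(prod_primes_logn n_gt0).
by rewrite unitary_count_prod ?primes_uniq ?all_prime_primes // => p; rewrite logn_gt0.
Qed.

Lemma Tdiv_sqr m : 0 < m -> Tdiv m ^ 2 = m ^ size (divisors m).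
Proof. by move=> m_gt0; rewrite /Tdiv -count_predT -prod_divisors_sqr. Qed.

Lemma Tstar_sqr n : 0 < n -> Tstar n ^ 2 = n ^ 2 ^ size (primes n).
Proof.
move=> n_gt0; rewrite -unitary_count_primes // prod_divisors_sqr // => d dvd_dn.
by rewrite /unitary divn_divn // coprime_sym.
Qed.

Lemma Tstar_pow n : 1 < n -> Tstar n = n ^ 2 ^ (size (primes n)).-1.
Proof.
move=> n_gt1; apply: (expIn (isT : 0 < 2)); rewrite Tstar_sqr 1?ltnW // -expnM.
have: size (primes n) != 0 by rewrite size_eq0 primes_eq0 -leqNgt.
by case: (size _) => // k _; rewrite expnS mulnC.
Qed.

Lemma perfect_divisors_Tstar {K n} : KT0Tstar_perfect K n ->
  K.*2 = 2 ^ (size (primes n)).-1 * size (divisors (Tstar n)).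
Proof.
case=> n_gt1 TT; have n_gt0 : 0 < n := ltnW n_gt1.
have S_gt0 : 0 < Tstar n by rewrite Tstar_pow // expn_gt0 n_gt0.
by apply: (expnI n_gt1); rewrite -muln2 expnM -TT Tdiv_sqr // {1}Tstar_pow // -expnM.
Qed.

Lemma perfect_size_primes {K n} :
  odd K -> KT0Tstar_perfect K n -> size (primes n) <= 2.
Proof.
move=> K_odd /perfect_divisors_Tstar; rewrite leqNgt.
case: (size _) => [|[|[|k]]] //= eK; move: K_odd.
have -> : K = 2 * (2 ^ k * size (divisors (Tstar n))) by rewrite !expnS in eK; lia.
by rewrite oddM.
Qed.

Lemma perfect_single_prime {K n p} :
  KT0Tstar_perfect K n -> primes n = [:: p] -> n = p ^ (2 * K - 1).
Proof.
move=> perf np; have [n_gt1 _] := perf.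
have n_pexp : n = p ^ logn p n.
  by rewrite {1}(prod_primes_logn (ltnW n_gt1)) np big_seq1.
have p_pr : prime p by have := all_prime_primes n; rewrite np /= andbT.
have := perfect_divisors_Tstar perf.
rewrite Tstar_pow // np /= expn0 expn1 {1}n_pexp size_divisors_pexp // mul1n => eK.
by rewrite {1}n_pexp; congr (_ ^ _); lia.
Qed.

Lemma perfect_two_primes {K n p q} :
  KT0Tstar_perfect K n -> primes n = [:: p; q] ->
  K = (logn p n).*2.+1 * (logn q n).*2.+1.
Proof.
move=> perf npq; have [n_gt1 _] := perf.
have n_pq : n = p ^ logn p n * q ^ logn q n.
  by rewrite {1}(prod_primes_logn (ltnW n_gt1)) npq big_cons big_seq1.
have := all_prime_primes n; rewrite npq /= => /and3P[p_pr q_pr _].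
have co_pq : coprime p q.
  by have := primes_uniq n; rewrite npq /= inE andbT prime_coprime // dvdn_prime2.
have := perfect_divisors_Tstar perf.
rewrite Tstar_pow // npq /= expn1 {1}n_pq expnMn -!expnM.
rewrite size_divisorsM ?expn_gt0 ?prime_gt0 ?coprimeXl ?coprimeXr //.
by rewrite !size_divisors_pexp //; lia.
Qed.

Theorem mainTheorem11 (K : nat) :
  2 <= K -> odd K -> ~~ prime K ->
  forall n : nat, KT0Tstar_perfect K n ->
    (exists p1, prime p1 /\ n = p1 ^ (2 * K - 1)) \/
    (exists p1 p2 d, [/\ prime p1 /\ prime p2, p1 != p2,
        d %| K, 2 < d < K &
        n = p1 ^ ((d - 1) %/ 2) * p2 ^ ((K %/ d - 1) %/ 2)]).
Proof.
move=> _ K_odd _ n perf; have [n_gt1 _] := perf.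
have mem_pr x : x \in primes n -> prime x by rewrite mem_primes => /andP[].
have := perfect_size_primes K_odd perf.
case np: (primes n) => [|p [|q []]] // _.
- by move/eqP: np; rewrite primes_eq0 ltnNge n_gt1.
- left; exists p; split; last exact: perfect_single_prime.
  by apply: mem_pr; rewrite np mem_seq1.
have [p_pr q_pr] : prime p /\ prime q.
  by split; apply: mem_pr; rewrite np !inE eqxx ?orbT.
have [a_gt0 b_gt0] : 0 < logn p n /\ 0 < logn q n.
  by rewrite !logn_gt0 np !inE !eqxx orbT.
have p_neq_q : p != q by have := primes_uniq n; rewrite np /= inE andbT.
have eK := perfect_two_primes perf np.
right; exists p, q, (logn p n).*2.+1; split => //.
- by rewrite eK dvdn_mulr.
- by rewrite eK; nia.
rewrite {1}(prod_primes_logn (ltnW n_gt1)) np big_cons big_seq1 eK mulKn //.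
by congr (_ ^ _ * _ ^ _); lia.
Qed.
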